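(* For every function $g\in A$ with $g\not\equiv 0$ there exist an orthonormal system $\{\varphi_n\}_{n\ge1}$ on $[0,1]$ and a sequence $a=\{a_n\}\in\ell_2$ such that, with $d_k=1$ for all $k$, $$\limsup_{n\to\infty}\sum_{k=1}^{n}C_k^2(g)\log^2 k=\limsup_{n\to\infty}|U_n(g)|=+\infty,$$ where $C_k(g)=\int_0^1 g(x)\varphi_k(x)\,dx$ and $U_n(g)=\int_0^1 g(x)\sum_{k=1}^n d_k a_k\log k\,\varphi_k(x)\,dx=\sum_{k=1}^n a_k \log k\, C_k(g)$.
   Context: $A$ denotes the Banach space of absolutely continuous functions on $[0,1]$ with norm $\|f\|_A=\max_{[0,1]}|f|+\int_0^1|f'(x)|\,dx$. An orthonormal system on $[0,1]$ is a sequence of functions orthonormal in $L_2(0,1)$. $\log$ denotes the logarithm (so $\log 1=0$). *)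

From mathcomp Require Import all_boot all_order all_algebra.
From mathcomp Require Import all_classical all_reals all_analysis.
Set Implicit Arguments. Unset Strict Implicit. Unset Printing Implicit Defensive.
Import Order.TTheory GRing.Theory Num.Theory.
Local Open Scope classical_set_scope.
Local Open Scope ring_scope.

Definition I01 (R : realType) : set R := `[(0:R), (1:R)].

Definition abs_continuous01 (R : realType) (f : R -> R) : Prop :=
  forall eps : R, 0 < eps -> exists2 delta : R, 0 < delta &
    forall (n : nat) (a b : 'I_n -> R),
      (forall i, 0 <= a i /\ a i <= b i /\ b i <= 1) ->
      (forall i j, i != j -> b i <= a j \/ b j <= a i) ->
      \sum_(i < n) (b i - a i) < delta ->
      \sum_(i < n) `|f (b i) - f (a i)| < eps.

Definition in_A (R : realType) (f : R -> R) : Prop := abs_continuous01 f.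

Definition orthonormal_system01 (R : realType) (phi : nat -> R -> R) : Prop :=
  (forall n, (1 <= n)%N -> measurable_fun (@I01 R) (phi n)) /\
  (forall n, (1 <= n)%N ->
     (@lebesgue_measure R).-integrable (@I01 R) (fun x => ((phi n x) ^+ 2)%:E)) /\
  (forall n m, (1 <= n)%N -> (1 <= m)%N ->
     (\int[@lebesgue_measure R]_(x in (@I01 R)) (phi n x * phi m x)%:E =
        (if n == m then 1 else 0)%:E)%E).

Definition fourier_coef (R : realType) (phi : nat -> R -> R) (g : R -> R) (k : nat) : R :=
  \int[@lebesgue_measure R]_(x in (@I01 R)) (g x * phi k x).

Definition in_l2 (R : realType) (a : nat -> R) : Prop :=
  (\sum_(1 <= k <oo) ((a k) ^+ 2)%:E < +oo)%E.

(* Near a point x0 with g x0 <> 0, continuity gives a window ]y, y + r[ of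
   [0, 1] on which s * g >= c > 0, where s is the sign of g x0.  The bumps
   2^N * 1_(J_N), with J_N = ]y + 4^-N, y + 2 * 4^-N[, have unit L2 norm, are
   pairwise disjoint and lie in the window for N > p, and satisfy
   s * int g 2^N 1_(J_N) >= c 2^-N.  The sparse index k_j = 4^(8^j) gets the
   bump of level p + 1 + 2j, every other index an odd level.  Then
   C_(k_j) log k_j >= K 8^j / 4^j = K 2^j, so with a_(k_j) = 2^-j and a_k = 0
   elsewhere (an l2 sequence) the nonnegative terms a_k C_k log k and
   C_k^2 log^2 k are at least K, resp. K^2, along k_j: both sums diverge. *)

From mathcomp Require Import all_boot all_order all_algebra.
From mathcomp Require Import all_classical all_reals all_analysis measurable_realfun.
From mathcomp Require Import ring lra zify.
Set Implicit Arguments. Unset Strict Implicit. Unset Printing Implicit Defensive.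
Import Order.TTheory GRing.Theory Num.Theory Num.Def numFieldNormedType.Exports.
Local Open Scope classical_set_scope.
Local Open Scope ring_scope.

Section partial_sums.
Variables (R : realType) (u : nat -> R).
Hypothesis u_ge0 : forall k, 0 <= u k.

Lemma partial_sum_le m n : (m <= n)%N ->
  \sum_(1 <= k < m.+1) u k <= \sum_(1 <= k < n.+1) u k.
Proof.
by move=> mn; rewrite [leRHS](@big_cat_nat _ _ _ m.+1) //= lerDl sumr_ge0.
Qed.

Lemma partial_sums_cvgy (K : R) : 0 < K ->
  (forall m, exists2 k, (m < k)%N & K <= u k) ->
  (fun n => \sum_(1 <= k < n.+1) u k) @ \oo --> +oo.
Proof.
move=> K_gt0 uK.
have sum_ge N : exists n, N%:R * K <= \sum_(1 <= k < n.+1) u k.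
  elim: N => [|N [n IH]]; first by exists 0%N; rewrite mul0r big_geq.
  have [[//|k] + Kk] := uK n; rewrite ltnS => nk.
  exists k.+1; rewrite -natr1 mulrDl mul1r big_nat_recr //= lerD //.
  exact: le_trans IH (partial_sum_le nk).
apply/cvgryPge => A; have [n An] := sum_ge (trunc (A / K)).+1.
have AK : A <= (trunc (A / K)).+1%:R * K.
  by rewrite -ler_pdivrMr // ltW // truncnS_gt.
near=> m; apply: le_trans AK (le_trans An (partial_sum_le _)).
by near: m; exists n.
Unshelve. all: by end_near.
Qed.

End partial_sums.

Lemma limn_esup_ge_cvgy (R : realType) (u v : nat -> R) :
  (forall n, u n <= v n) -> u @ \oo --> +oo ->
  limn_esup (fun n => (v n)%:E) = +oo%E.
Proof.
move=> uv /(ger_cvgy (nearW _ uv)) /cvgeryP vy.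
by rewrite is_cvg_limn_esupE ?(cvg_lim _ vy) //; apply/cvg_ex; exists +oo%E.
Qed.

Lemma sgr_mul_gt_half (R : realFieldType) (a b : R) :
  `|b - a| < `|a| / 2 -> `|a| / 2 < Num.sg a * b.
Proof.
move=> ba; have : `|Num.sg a * (b - a)| <= `|b - a|.
  by rewrite normrM normr_sg ler_piMl // lern1 leq_b1.
rewrite mulrBr -normrEsg => /le_lt_trans /(_ ba); rewrite ltr_norml => /andP[+ _].
lra.
Qed.

Lemma bounded_of_le (T : Type) (R : realType) (A : set T) (f : T -> R) (M : R) :
  (forall x, A x -> `|f x| <= M) -> [bounded f x | x in A].
Proof.
move=> fM; rewrite /bounded_near; near=> B => x /fM /le_trans; apply.
by near: B; apply: nbhs_pinfty_ge; exact: num_real.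
Unshelve. all: by end_near.
Qed.

Section Rintegral_patch.
Context d (T : measurableType d) (R : realType) (mu : {measure set T -> \bar R}).

Lemma integrable_patch (D J : set T) (f : T -> R) : measurable D -> measurable J ->
  mu.-integrable J (EFin \o f) -> mu.-integrable D (EFin \o (f \_ J)).
Proof.
move=> mD mJ fJ; apply: (integrableS measurableT) => //.
by rewrite -restrict_EFin -integrable_mkcond.
Qed.

Lemma integrable_EFinZl (D : set T) (k : R) (f : T -> R) : measurable D ->
  mu.-integrable D (EFin \o f) -> mu.-integrable D (EFin \o (fun x => k * f x)).
Proof.
move=> mD intf; rewrite (_ : EFin \o _ = fun x => k%:E * (EFin \o f) x)%E.
  exact: integrableZl.
by apply/funext => x; rewrite /= EFinM.
Qed.

Lemma Rintegral_patch (D J : set T) (f : T -> R) : J `<=` D ->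
  \int[mu]_(x in D) (f \_ J) x = \int[mu]_(x in J) f x.
Proof. by move=> JD; rewrite -Rintegral_mkcondr setIidr. Qed.

Lemma Rintegral_sum (D : set T) (I : Type) (s : seq I) (P : pred I)
    (f : I -> T -> R) : measurable D ->
  (forall i, mu.-integrable D (EFin \o f i)) ->
  \int[mu]_(x in D) (\sum_(i <- s | P i) f i x) =
  \sum_(i <- s | P i) \int[mu]_(x in D) f i x.
Proof.
move=> mD intf; rewrite /Rintegral.
under eq_integral do rewrite -sumEFin.
rewrite integral_sum // sum_fine // => i _.
by apply: integrable_fin_num => //; exact: intf.
Qed.

End Rintegral_patch.

Definition lacunary (j : nat) : nat := 4 ^ 8 ^ j.
Definition lacunary_rank (k : nat) : nat := trunc_log 8 (trunc_log 4 k).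
Definition is_lacunary (k : nat) : bool := k == lacunary (lacunary_rank k).

Lemma lacunaryK : cancel lacunary lacunary_rank.
Proof. by move=> j; rewrite /lacunary_rank /lacunary !trunc_expnK. Qed.

Lemma lacunary_inj : injective lacunary.
Proof. exact: can_inj lacunaryK. Qed.

Lemma is_lacunary_lacunary j : is_lacunary (lacunary j).
Proof. by rewrite /is_lacunary lacunaryK. Qed.

Lemma ltn_lacunary j : (j < lacunary j)%N.
Proof. exact: ltn_trans (ltn_expl _ _) (ltn_expl _ _). Qed.

Lemma ln_lacunary (R : realType) j : ln ((lacunary j)%:R : R) = ln 4 * 8 ^+ j.
Proof. by rewrite /lacunary natrX lnXn // -[ln _ *+ _]mulr_natr natrX. Qed.

(* The lacunary index of rank j gets the small even level 2j, hence a wide bump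
   and a large coefficient; every other index is parked on an odd level. *)
Definition level (k : nat) : nat :=
  if is_lacunary k then (lacunary_rank k).*2 else k.*2.+1.

Lemma level_lacunary j : level (lacunary j) = j.*2.
Proof. by rewrite /level is_lacunary_lacunary lacunaryK. Qed.

Lemma level_inj : injective level.
Proof.
move=> k m; rewrite /level /is_lacunary.
case: eqP => [kE | _]; case: eqP => [mE | _]; try lia.
by move=> /double_inj rkm; rewrite kE mE rkm.
Qed.

Section lacunary_coef.
Variable R : realType.

Definition lacunary_coef (k : nat) : R :=
  if is_lacunary k then 2^-1 ^+ lacunary_rank k else 0.

Lemma lacunary_coef_lacunary j : lacunary_coef (lacunary j) = 2^-1 ^+ j.
Proof. by rewrite /lacunary_coef is_lacunary_lacunary lacunaryK. Qed.

Lemma lacunary_coef0 : lacunary_coef 0 = 0.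
Proof. by rewrite /lacunary_coef /is_lacunary eq_sym eqn0Ngt expn_gt0. Qed.

Lemma lacunary_coef_ge0 k : 0 <= lacunary_coef k.
Proof. by rewrite /lacunary_coef; case: ifP => // _; rewrite exprn_ge0. Qed.

Lemma lacunary_coef_sqrE n k : (k < n)%N ->
  lacunary_coef k ^+ 2 = \sum_(0 <= j < n | k == lacunary j) 4^-1 ^+ j.
Proof.
move=> kn; rewrite /lacunary_coef /is_lacunary; case: eqP => [kE | kN].
  rewrite (eq_bigl (pred1 (lacunary_rank k))) => [|j /=]; last first.
    by rewrite {1}kE (inj_eq lacunary_inj) eq_sym.
  have rk : (lacunary_rank k < n)%N.
    by rewrite (ltn_trans _ kn) // [X in (_ < X)%N]kE ltn_lacunary.
  have quarter : (2^-1 : R) ^+ 2 = 4^-1 by rewrite expr2 -invfM -natrM.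
  by rewrite big_nat1_eq rk /= -exprM mulnC exprM quarter.
rewrite big_pred0 ?expr0n // => j; apply/eqP => kj.
by apply: kN; rewrite {2}kj lacunaryK.
Qed.

Lemma lacunary_coef_sqr_sum n :
  \sum_(1 <= k < n) lacunary_coef k ^+ 2 <= series (geometric 1 4^-1) n.
Proof.
rewrite seriesEnat /= (eq_big_nat _ _ (F2 := fun k =>
  \sum_(0 <= j < n) if k == lacunary j then 4^-1 ^+ j else 0)); last first.
  by move=> k /andP[_ kn]; rewrite (lacunary_coef_sqrE kn) big_mkcond.
rewrite exchange_big_nat /=; apply: ler_sum => j _.
rewrite -big_mkcond big_nat1_eq /geometric mul1r.
by case: ifP => // _; rewrite exprn_ge0 // invr_ge0.
Qed.

Lemma lacunary_coef_l2 : in_l2 lacunary_coef.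
Proof.
rewrite /in_l2; apply: (@le_lt_trans _ _ (1 * (1 - 4^-1)^-1)%:E); last by rewrite ltry.
apply: lime_le; first by apply: is_cvg_nneseries => k _ _; rewrite lee_fin sqr_ge0.
apply: nearW => n; rewrite sumEFin lee_fin (le_trans (lacunary_coef_sqr_sum n)) //.
by apply: geometric_le_lim; rewrite ?ger0_norm ?invr_gt0 ?invf_lt1 ?ltr1n.
Qed.

End lacunary_coef.

Section bump.
Variables (R : realType) (y : R).

Definition bump_width (N : nat) : R := 4 ^- N.
Definition bump_itv (N : nat) : set R :=
  `]y + bump_width N, y + 2 * bump_width N[.
Definition bump (N : nat) : R -> R := cst (2 ^+ N : R) \_ (bump_itv N).

Lemma bump_width_gt0 N : 0 < bump_width N.
Proof. by rewrite invr_gt0 exprn_gt0. Qed.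

Lemma bump_width_double_lt N M : (N < M)%N -> 2 * bump_width M < bump_width N.
Proof.
move=> NM; have w0 := bump_width_gt0 N.
have : bump_width M <= bump_width N / 4.
  rewrite /bump_width -invfM -exprSr lef_pV2 ?posrE ?exprn_gt0 //.
  by rewrite ler_eXn2l ?ltr1n.
lra.
Qed.

Lemma exists_bump_width_le r : 0 < r -> exists p, bump_width p <= r.
Proof.
move=> r_gt0; exists (trunc r^-1).
rewrite /bump_width -[leRHS]invrK lef_pV2 ?posrE ?invr_gt0 ?exprn_gt0 //.
by rewrite (le_trans (ltW (truncnS_gt _))) // -natrX ler_nat ltn_expl.
Qed.

Lemma bump_height_width N : 2 ^+ N * bump_width N = 2 ^- N.
Proof.
have four : (4 : R) = 2 * 2 by rewrite -natrM.
by rewrite /bump_width four exprMn invfM mulVKf // expf_neq0.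
Qed.

Lemma measurable_bump_itv N : measurable (bump_itv N).
Proof. exact: measurable_itv. Qed.

(* Stated through the measure structure, the form in which integrability lemmas
   present lebesgue_measure; Rintegral wraps it in yet another coercion,
   hence the pattern rewrite in Rintegral_bump_itv_cst. *)
Lemma bump_itv_measure N :
  (lebesgue_measure : measure _ R) (bump_itv N) = (bump_width N)%:E.
Proof.
have w0 := bump_width_gt0 N.
apply: eq_trans (lebesgue_measure_itv _) _.
rewrite /= lte_fin ltrD2l ifT; last lra.
by congr EFin; lra.
Qed.

Lemma Rintegral_bump_itv_cst (a : R) N :
  \int[lebesgue_measure]_(x in bump_itv N) a = a * bump_width N.
Proof.
rewrite Rintegral_cst; last exact: measurable_bump_itv.
by rewrite (_ : _ (bump_itv N) = (bump_width N)%:E); last exact: bump_itv_measure.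
Qed.

Lemma bump_itv_disjoint N M : N != M -> bump_itv N `&` bump_itv M = set0.
Proof.
have disj K L : (K < L)%N -> forall x, bump_itv K x -> ~ bump_itv L x.
  move=> KL x; rewrite /bump_itv /= !in_itv /= => /andP[xK _] /andP[_ xL].
  by have := bump_width_double_lt KL; lra.
rewrite neq_ltn => /orP[NM|MN]; apply/seteqP; split => // x [xN xM].
- exact: disj N M NM x xN xM.
- exact: disj M N MN x xM xN.
Qed.

Lemma bump_itv_sub r p N : bump_width p <= r -> (p < N)%N ->
  bump_itv N `<=` `]y, y + r[.
Proof.
move=> pr pN x; rewrite /bump_itv /= !in_itv /= => /andP[xl xr].
have := bump_width_gt0 N; have := bump_width_double_lt pN => *.
by apply/andP; split; lra.
Qed.

Lemma measurable_bump (D : set R) N : measurable D -> measurable_fun D (bump N).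
Proof.
move=> mD; apply: (measurable_funS measurableT) => //.
by apply/(measurable_restrictT _ (measurable_bump_itv N)).
Qed.

Lemma bump_sqr_integrable (D : set R) N : measurable D ->
  lebesgue_measure.-integrable D (fun x => (bump N x ^+ 2)%:E).
Proof.
move=> mD; have -> : (fun x => (bump N x ^+ 2)%:E) =
    EFin \o (cst ((2 ^+ N) ^+ 2 : R) \_ (bump_itv N)).
  by apply/funext => x; rewrite /= /bump !patchE; case: ifP; rewrite ?expr0n.
apply: integrable_patch => //; first exact: measurable_bump_itv.
apply: measurable_bounded_integrable; first exact: measurable_bump_itv.
- by rewrite bump_itv_measure ltry.
- exact: measurable_cst.
- exact: (@bounded_of_le _ _ _ _ `|(2 ^+ N) ^+ 2|).
Qed.

Lemma bump_dot (D : set R) N M : measurable D -> bump_itv N `<=` D ->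
  (\int[lebesgue_measure]_(x in D) (bump N x * bump M x)%:E =
    (if N == M then 1 else 0)%:E)%E.
Proof.
move=> mD ND; case: eqVneq => [<-|NM].
  have -> : (fun x => (bump N x * bump N x)%:E) =
      cst ((2 ^+ N) ^+ 2)%:E \_ (bump_itv N).
    apply/funext => x; rewrite /bump !patchE.
    by case: ifP; rewrite ?mulr0 // expr2.
  rewrite -integral_mkcondr setIidr // integral_cst; last exact: measurable_bump_itv.
  by rewrite bump_itv_measure -EFinM expr2 -mulrA bump_height_width divff // expf_neq0.
have -> : (fun x => (bump N x * bump M x)%:E) = cst 0%E; last by rewrite integral0.
apply/funext => x; rewrite /bump !patchE.
case: ifPn => [/set_mem xN|]; last by rewrite mul0r.
case: ifPn => [/set_mem xM|]; last by rewrite mulr0.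
by have /seteqP[/(_ x (conj xN xM))] := bump_itv_disjoint NM.
Qed.

End bump.

#[local] Hint Extern 0 (measurable (bump_itv _ _)) =>
  solve [apply: measurable_bump_itv] : core.

Lemma window_sub_I01 (R : realType) (y r : R) : 0 <= y -> y + r <= 1 ->
  `]y, y + r[ `<=` @I01 R.
Proof.
move=> y_ge0 yr_le1 x; rewrite /I01 /= !in_itv /= => /andP[yx xr].
by apply/andP; split; lra.
Qed.

Section abs_continuous01.
Variables (R : realType) (g : R -> R).
Hypothesis g_ac : abs_continuous01 g.

Lemma abs_continuous01_uniform (eps : R) : 0 < eps -> exists2 del : R, 0 < del &
  forall u v, 0 <= u <= 1 -> 0 <= v <= 1 -> `|u - v| < del -> `|g u - g v| < eps.
Proof.
move=> eps_gt0; have [del del_gt0 gdel] := g_ac eps_gt0; exists del => //.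
(* a single interval is a non-overlapping family *)
have ordered u v : 0 <= u -> u <= v -> v <= 1 -> v - u < del -> `|g v - g u| < eps.
  move=> u0 uv v1 uv_del.
  have := gdel 1%N (fun _ => u) (fun _ => v); rewrite !big_ord1; apply => //.
  by move=> i j; rewrite !ord1 eqxx.
move=> u v /andP[u0 u1] /andP[v0 v1]; have [uv|vu] := leP u v.
  rewrite distrC [`|g u - _|]distrC ger0_norm ?subr_ge0 //.
  exact: ordered u0 uv v1.
rewrite ger0_norm ?subr_ge0 ?ltW //.
exact: ordered v0 (ltW vu) u1.
Qed.

Lemma abs_continuous01_continuous : {in `]0, 1[, continuous g}.
Proof.
move=> z; rewrite in_itv /= => /andP[z0 z1]; apply/cvgrPdist_lt => eps eps_gt0.
have [del del_gt0 gdel] := abs_continuous01_uniform eps_gt0.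
apply/nbhs_ballP; exists (Num.min del (Num.min z (1 - z))).
  by rewrite /= !lt_min del_gt0 z0 subr_gt0 z1.
move=> t; rewrite /ball /= !lt_min => /andP[zt_del /andP[zt_z zt_1]].
apply: gdel => //; first by rewrite !ltW.
by move: zt_z zt_1; rewrite !ltr_norml => /andP[? ?] /andP[? ?]; apply/andP; split; lra.
Qed.

Lemma abs_continuous01_window (x0 eps : R) : 0 <= x0 <= 1 -> 0 < eps ->
  exists y r : R, [/\ 0 <= y, y + r <= 1, 0 < r, measurable_fun `]y, y + r[ g &
    forall z, z \in `]y, y + r[ -> `|g z - g x0| < eps].
Proof.
move=> /andP[x0_ge0 x0_le1] eps_gt0.
have [del del_gt0 gdel] := abs_continuous01_uniform eps_gt0.
pose r := Num.min del 1 / 2.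
have r_gt0 : 0 < r by rewrite divr_gt0 // lt_min del_gt0 ltr01.
have r_del : r <= del / 2 by rewrite ler_pM2r // ge_min lexx.
have r_half : r <= 1 / 2 by rewrite ler_pM2r // ge_min lexx orbT.
pose y := if x0 <= 1 / 2 then x0 else x0 - r.
have [y_ge0 yr_le1 near_x0] : [/\ 0 <= y, y + r <= 1 &
    forall z, y < z < y + r -> [/\ 0 < z, z < 1 & `|z - x0| < del]].
  rewrite /y; case: (leP x0 (1 / 2)) => x0_half; split; try lra;
    by move=> z /andP[? ?]; rewrite ltr_norml; split; try (apply/andP; split); lra.
exists y, r; split => //.
  apply: open_continuous_measurable_fun; first exact: interval_open.
  move=> z /set_mem; rewrite /= in_itv /= => /near_x0 [z0 z1 _].
  by apply: abs_continuous01_continuous; rewrite in_itv /= z0 z1.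
move=> z; rewrite in_itv /= => /near_x0 [z0 z1 zx0].
by apply: gdel; rewrite ?(ltW z0) ?(ltW z1) ?x0_ge0.
Qed.

End abs_continuous01.

Section lacunary_system.
Variables (R : realType) (g : R -> R) (y r c M s : R) (p : nat).
Hypotheses (y_ge0 : 0 <= y) (yr_le1 : y + r <= 1) (p_width : bump_width R p <= r).
Hypotheses (c_gt0 : 0 < c) (s_sqr : s ^+ 2 = 1).
Hypothesis g_mfun : measurable_fun `]y, y + r[ g.
Hypothesis g_le : forall z, z \in `]y, y + r[ -> `|g z| <= M.
Hypothesis sg_ge : forall z, z \in `]y, y + r[ -> c <= s * g z.

Definition system_level (k : nat) : nat := (p.+1 + level k)%N.

Definition lacunary_system (k : nat) (x : R) : R := s * bump y (system_level k) x.

Local Notation J k := (bump_itv y (system_level k)).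

Let measurable_I01 : measurable (@I01 R). Proof. exact: measurable_itv. Qed.

Lemma system_itv_sub k : J k `<=` `]y, y + r[.
Proof. by apply: bump_itv_sub p_width _; rewrite /system_level ltn_addr. Qed.

Lemma system_itv_sub_I01 k : J k `<=` @I01 R.
Proof. by move=> x /system_itv_sub; apply: window_sub_I01. Qed.

Lemma lacunary_system_orthonormal : orthonormal_system01 lacunary_system.
Proof.
split; [|split] => [k _ | k _ | n m _ _].
- by apply: measurable_funM; [exact: measurable_cst | exact: measurable_bump].
- under eq_fun do rewrite /lacunary_system exprMn s_sqr mul1r.
  exact: bump_sqr_integrable.
- under eq_integral => x _ do rewrite /lacunary_system mulrACA -expr2 s_sqr mul1r.
  rewrite bump_dot //; last exact: system_itv_sub_I01.
  by rewrite (inj_eq (can_inj (addKn p.+1))) (inj_eq level_inj).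
Qed.

Lemma integrable_g_system_itv k : lebesgue_measure.-integrable (J k) (EFin \o g).
Proof.
apply: measurable_bounded_integrable => //.
- by rewrite bump_itv_measure ltry.
- by apply: measurable_funS g_mfun => //; exact: system_itv_sub.
- by apply: (@bounded_of_le _ _ _ _ M) => z /system_itv_sub /g_le.
Qed.

Lemma g_lacunary_systemE k x :
  g x * lacunary_system k x = s * 2 ^+ system_level k * (g \_ (J k)) x.
Proof.
by rewrite /lacunary_system /bump !patchE; case: ifP => _ /=; [ring | rewrite !mulr0].
Qed.

Lemma g_lacunary_system_integrable k :
  lebesgue_measure.-integrable (@I01 R) (EFin \o (fun x => g x * lacunary_system k x)).
Proof.
under eq_fun do rewrite g_lacunary_systemE.
apply: integrable_EFinZl => //; apply: integrable_patch => //.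
exact: integrable_g_system_itv.
Qed.

Lemma Rintegral_sg_ge k :
  c * bump_width R (system_level k) <= \int[lebesgue_measure]_(x in J k) (s * g x).
Proof.
rewrite -(Rintegral_bump_itv_cst y); apply: le_Rintegral => //.
- apply: measurable_bounded_integrable => //; first by rewrite bump_itv_measure ltry.
  exact: (@bounded_of_le _ _ _ _ `|c|).
- exact: integrable_EFinZl (integrable_g_system_itv k).
- by move=> x /system_itv_sub /sg_ge.
Qed.

Lemma fourier_coef_lacunary_system_ge k :
  c / 2 ^+ system_level k <= fourier_coef lacunary_system g k.
Proof.
have gJ := integrable_g_system_itv k.
rewrite /fourier_coef; under eq_Rintegral => x _ do rewrite g_lacunary_systemE.
rewrite RintegralZl //; last exact: integrable_patch.
rewrite Rintegral_patch; last exact: system_itv_sub_I01.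
rewrite mulrAC -RintegralZl // -bump_height_width mulrA mulrAC ler_pM2r ?exprn_gt0 //.
exact: Rintegral_sg_ge.
Qed.

Lemma fourier_coef_lacunary_system_gt0 k : 0 < fourier_coef lacunary_system g k.
Proof.
by apply: lt_le_trans (fourier_coef_lacunary_system_ge k); rewrite divr_gt0 ?exprn_gt0.
Qed.

Lemma Rintegral_g_lacunary_system_sum (b : nat -> R) n :
  \int[lebesgue_measure]_(x in @I01 R)
      (g x * \sum_(1 <= k < n.+1) (b k * lacunary_system k x)) =
  \sum_(1 <= k < n.+1) b k * fourier_coef lacunary_system g k.
Proof.
under eq_Rintegral => x _ do rewrite mulr_sumr.
under eq_Rintegral => x _ do under eq_bigr => k _ do rewrite mulrCA.
rewrite Rintegral_sum //; last first.
  by move=> k; apply: integrable_EFinZl => //; exact: g_lacunary_system_integrable.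
apply: eq_bigr => k _; rewrite RintegralZl //.
exact: g_lacunary_system_integrable.
Qed.

Let K := c * ln 4 / 2 ^+ p.+1.

Let K_gt0 : 0 < K.
Proof. by rewrite divr_gt0 ?mulr_gt0 ?exprn_gt0 ?ln_gt0 ?ltr1n. Qed.

Lemma fourier_coef_lacunary_ln_ge j :
  K * 2 ^+ j <= fourier_coef lacunary_system g (lacunary j) * ln (lacunary j)%:R.
Proof.
have ln4_gt0 : 0 < ln (4 : R) by rewrite ln_gt0 ?ltr1n.
rewrite ln_lacunary; apply: le_trans (ler_wpM2r _ (fourier_coef_lacunary_system_ge _)).
  suff -> : c / 2 ^+ system_level (lacunary j) * (ln 4 * 8 ^+ j) = K * 2 ^+ j by [].
  have eight : (8 : R) ^+ j = (2 ^+ j) ^+ 3.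
    by rewrite -[RHS]exprM mulnC exprM; congr (_ ^+ _); rewrite -natrX.
  rewrite /system_level level_lacunary exprD -muln2 exprM eight /K.
  by field; rewrite !expf_neq0.
by rewrite mulr_ge0 ?exprn_ge0 ?ltW.
Qed.

Lemma lacunary_system_coef_ln_limsup :
  limn_esup (fun n => (\sum_(1 <= k < n.+1)
    fourier_coef lacunary_system g k ^+ 2 * ln (k%:R : R) ^+ 2)%:E) = +oo%E.
Proof.
apply: limn_esup_ge_cvgy (fun n => lexx _) _.
apply: (@partial_sums_cvgy _ _ _ (K ^+ 2)) => [k | | m].
- by rewrite mulr_ge0 ?sqr_ge0.
- by rewrite exprn_gt0.
exists (lacunary m); first exact: ltn_lacunary.
have K_le : K <= fourier_coef lacunary_system g (lacunary m) * ln (lacunary m)%:R.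
  apply: le_trans (fourier_coef_lacunary_ln_ge m).
  by rewrite ler_pMr // exprn_ege1 // ler1n.
have K_ge0 := ltW K_gt0.
by rewrite -exprMn ler_pXn2r // !nnegrE // (le_trans K_ge0).
Qed.

Lemma lacunary_system_partial_integral_limsup (d : nat -> R) :
  (forall k, 1 <= d k) ->
  limn_esup (fun n => (`|\int[lebesgue_measure]_(x in @I01 R)
    (g x * \sum_(1 <= k < n.+1)
       (d k * lacunary_coef R k * ln (k%:R : R) * lacunary_system k x))|)%:E)
  = +oo%E.
Proof.
move=> d_ge1; pose b k := d k * lacunary_coef R k * ln (k%:R : R).
apply: (@limn_esup_ge_cvgy _ (fun n =>
  \sum_(1 <= k < n.+1) b k * fourier_coef lacunary_system g k)).
  by move=> n; rewrite (@Rintegral_g_lacunary_system_sum b n) ler_norm.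
apply: (@partial_sums_cvgy _ _ _ K) => // [k | m].
  apply: mulr_ge0; last exact/ltW/fourier_coef_lacunary_system_gt0.
  case: k => [|k]; first by rewrite /b lacunary_coef0 mulr0 mul0r.
  by rewrite !mulr_ge0 ?lacunary_coef_ge0 ?ln_ge0 ?ler1n // (le_trans ler01).
exists (lacunary m); first exact: ltn_lacunary.
have K_le : K <= 2^-1 ^+ m *
    (fourier_coef lacunary_system g (lacunary m) * ln (lacunary m)%:R).
  apply: le_trans (ler_wpM2l _ (fourier_coef_lacunary_ln_ge m)).
    by rewrite mulrCA -exprMn mulVf ?expr1n ?mulr1.
  by rewrite exprn_ge0 // invr_ge0.
have coef_ge0 := le_trans (ltW K_gt0) K_le.
rewrite /b lacunary_coef_lacunary -!mulrA [ln _ * _]mulrC.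
exact: le_trans K_le (ler_peMl coef_ge0 (d_ge1 _)).
Qed.

End lacunary_system.

Theorem theorem4 (R : realType) (g : R -> R) :
  in_A g ->
  (exists x : R, 0 <= x <= 1 /\ g x != 0) ->
  exists (phi : nat -> R -> R) (a : nat -> R),
    orthonormal_system01 phi /\ in_l2 a /\
    let d : nat -> R := fun _ => 1 in
    limn_esup (fun n : nat =>
      (\sum_(1 <= k < n.+1) ((fourier_coef phi g k) ^+ 2 * (ln (k%:R : R)) ^+ 2))%:E)
      = +oo%E /\
    limn_esup (fun n : nat =>
      (`| \int[@lebesgue_measure R]_(x in (@I01 R))
            (g x * \sum_(1 <= k < n.+1) (d k * a k * ln (k%:R : R) * phi k x)) |)%:E)
      = +oo%E.
Proof.
move=> g_ac [x0 [x01 gx0]].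
pose c := `|g x0| / 2; have c_gt0 : 0 < c by rewrite divr_gt0 // normr_gt0.
have [y [r [y_ge0 yr_le1 r_gt0 g_mfun g_near]]] :=
  abs_continuous01_window g_ac x01 c_gt0.
have [p p_width] := exists_bump_width_le r_gt0.
have g_le z : z \in `]y, y + r[ -> `|g z| <= `|g x0| + c.
  by move=> /g_near gz; have := lerB_dist (g z) (g x0); lra.
have sg_ge z : z \in `]y, y + r[ -> c <= Num.sg (g x0) * g z.
  by move=> /g_near /sgr_mul_gt_half /ltW.
have s_sqr : Num.sg (g x0) ^+ 2 = 1 by rewrite sqr_sg gx0.
exists (lacunary_system y (Num.sg (g x0)) p), (lacunary_coef R).
split; first exact: lacunary_system_orthonormal y_ge0 yr_le1 p_width s_sqr.
split; first exact: lacunary_coef_l2.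
move=> d; split.
  exact: lacunary_system_coef_ln_limsup y_ge0 yr_le1 p_width c_gt0 g_mfun g_le sg_ge.
apply: (lacunary_system_partial_integral_limsup y_ge0 yr_le1 p_width c_gt0
  g_mfun g_le sg_ge (d := d)).
by move=> k; rewrite /d.
Qed.
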